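(* Let $R\ge1$, $\mathbf{x}$ a vector of pairwise distinct reals, $\mathbf{c}\in\mathbb{R}^R$, $B=B(\mathbf{x},\mathbf{c})$, $1\le n\le R$, and $k$ a positive integer. Let $B_{-n}$ denote the matrix obtained from $B$ by deleting its $n$-th row and $n$-th column, with rows and columns still indexed by $\{1,\dots,R\}\setminus\{n\}$. Then $$\sum_{\substack{1\le l,m\le R\\ l\ne n,\ m\ne n,\ l\ne m}} b_{n,l}\,b_{m,n}\,(B_{-n}^k)_{l,m}=0.$$ Equivalently, for every $k\ge1$ the off-diagonal entries of $B_{-n}^k$ satisfy this weighted vanishing relation.
   Context: For pairwise distinct reals $x_1,\dots,x_R$ and reals $c_1,\dots,c_R$, $B=B(\mathbf{x},\mathbf{c})$ is the $R\times R$ matrix with entries $b_{m,m}=0$ and $b_{m,n}=\frac{c_mc_n}{x_m-x_n}$ for $m\ne n$. *)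

From HB Require Import structures.
From mathcomp Require Import all_boot all_order all_algebra.
Set Implicit Arguments. Unset Strict Implicit. Unset Printing Implicit Defensive.
Import Order.TTheory GRing.Theory Num.Theory.
Local Open Scope ring_scope.

Definition Bmat (F : fieldType) (N : nat) (x c : 'I_N -> F) : 'M[F]_N :=
  \matrix_(m, n) (if m == n then 0 else c m * c n / (x m - x n)).

(* B_{-n}: delete row and column n; index i : 'I_N.-1 stands for lift n i,
   i.e. {1..N} \ {n} in increasing order. *)
Definition delmx (F : fieldType) (r : nat) (n : 'I_r.+1) (A : 'M[F]_r.+1)
  : 'M[F]_r := \matrix_(i, j) A (lift n i) (lift n j).

From HB Require Import structures.
From mathcomp Require Import all_boot all_order all_algebra.
From mathcomp Require Import ring.
Import Order.TTheory GRing.Theory Num.Theory.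
Local Open Scope ring_scope.

(* Write a := x_n, w_i := 1/(a - x_i) and M := B_{-n}.  For
   distinct l, m (both different from n) the partial-fraction identity
     1/((a - x_l)(x_m - a)) = - (w_l - w_m) / (x_l - x_m)
   gives  b_{n,l} b_{m,n} = - c_n^2 M_{l,m} (w_l - w_m).  The sum to be
   computed is therefore - c_n^2 times
     S = sum_{l,m} M_{l,m} (w_l - w_m) (M^k)_{l,m}
   (the diagonal terms vanish, so the condition l <> m may be dropped).
   Splitting S, the w_l-part is sum_l w_l (M^k M^T)_{l,l} and the w_m-part is
   sum_m w_m (M^T M^k)_{m,m}; they coincide as soon as M^T commutes with M^k,
   which holds because B, hence M, is antisymmetric. *)

Lemma weighted_pairing_commute (R : comPzRingType) (r : nat) (M P : 'M[R]_r)
    (w : 'I_r -> R) :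
  M^T *m P = P *m M^T ->
  \sum_(l < r) \sum_(m < r) M l m * (w l - w m) * P l m = 0.
Proof.
move=> MtP.
have rowE l : \sum_(m < r) M l m * P l m = (P *m M^T) l l.
  by rewrite mxE; apply: eq_bigr => m _; rewrite mxE mulrC.
have colE m : \sum_(l < r) M l m * P l m = (M^T *m P) m m.
  by rewrite mxE; apply: eq_bigr => l _; rewrite mxE.
have splitE : \sum_(l < r) \sum_(m < r) M l m * (w l - w m) * P l m =
    \sum_(l < r) w l * \sum_(m < r) M l m * P l m
  - \sum_(m < r) w m * \sum_(l < r) M l m * P l m.
  under [X in _ = _ - X]eq_bigr do rewrite mulr_sumr.
  rewrite [X in _ = _ - X]exchange_big -sumrB; apply: eq_bigr => l _.
  rewrite mulr_sumr -sumrB; apply: eq_bigr => m _; ring.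
rewrite splitE; apply/eqP; rewrite subr_eq0; apply/eqP.
by apply: eq_bigr => i _; rewrite rowE colE MtP.
Qed.

(* B(x, c) is antisymmetric, for arbitrary x (a zero denominator makes
   both entries vanish). *)
Lemma Bmat_antisym (F : fieldType) (N : nat) (x c : 'I_N -> F) :
  (Bmat x c)^T = - Bmat x c.
Proof.
apply/matrixP => i j; rewrite !mxE eq_sym.
case: eqP => _; first by rewrite oppr0.
by rewrite -[x j - x i]opprB invrN mulrN [c j * c i]mulrC.
Qed.

Lemma delmx_tr (F : fieldType) (r : nat) (n : 'I_r.+1) (A : 'M[F]_r.+1) :
  (delmx n A)^T = delmx n A^T.
Proof. by apply/matrixP => i j; rewrite !mxE. Qed.

(* Principal submatrices of an antisymmetric matrix are antisymmetric, so
   their transpose commutes with their powers. *)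
Lemma delmx_Bmat_tr_commute (F : fieldType) (r : nat) (x c : 'I_r.+1 -> F)
    (n : 'I_r.+1) (k : nat) :
  let M := delmx n (Bmat x c) in M^T *m M ^+ k = M ^+ k *m M^T.
Proof.
have MtE : (delmx n (Bmat x c))^T = - delmx n (Bmat x c).
  by rewrite delmx_tr Bmat_antisym; apply/matrixP => i j; rewrite !mxE.
by rewrite /= MtE mulNmx mulmxN !mulmxE -exprS exprSr.
Qed.

Lemma Bmat_entry_product (F : fieldType) (N : nat) (x c : 'I_N -> F)
    (i j l : 'I_N) :
  injective x -> i != j -> i != l -> j != l ->
  Bmat x c i j * Bmat x c l i =
    - c i ^+ 2 * (Bmat x c j l * ((x i - x j)^-1 - (x i - x l)^-1)).
Proof.
move=> hx ij il jl.
have dx a b : a != b -> x a - x b != 0.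
  by move=> ab; rewrite subr_eq0 (inj_eq hx).
rewrite !mxE (negbTE ij) (negbTE jl) eq_sym (negbTE il).
have := dx _ _ ij; have := dx _ _ il; have := dx _ _ jl.
have := dx l i; rewrite eq_sym il => /(_ isT).
move=> h1 h2 h3 h4; field; by rewrite h1 h2 h3 h4.
Qed.

Theorem lemma1 (F : realFieldType) (r : nat) (x c : 'I_r.+1 -> F)
  (hx : injective x) (n : 'I_r.+1) (k : nat) (hk : (0 < k)%N) :
  \sum_(l < r) \sum_(m < r | l != m)
     Bmat x c n (lift n l) * Bmat x c (lift n m) n
       * ((delmx n (Bmat x c)) ^+ k) l m = 0.
Proof.
set M := delmx n (Bmat x c); set P := M ^+ k.
pose w (i : 'I_r) := (x n - x (lift n i))^-1.
have termE l m : l != m ->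
    Bmat x c n (lift n l) * Bmat x c (lift n m) n * P l m
    = - c n ^+ 2 * (M l m * (w l - w m) * P l m).
  move=> lm; rewrite Bmat_entry_product ?neq_lift ?(inj_eq (@lift_inj _ n)) //.
  have -> : M l m = Bmat x c (lift n l) (lift n m) by rewrite mxE.
  by rewrite !mulrA.
have fullE l : \sum_(m < r | l != m)
    Bmat x c n (lift n l) * Bmat x c (lift n m) n * P l m
    = - c n ^+ 2 * \sum_(m < r) M l m * (w l - w m) * P l m.
  rewrite [in RHS](bigD1 l) //= subrr mulr0 mul0r add0r mulr_sumr.
  by apply: eq_big => [m|m lm]; rewrite 1?eq_sym // termE.
rewrite (eq_bigr _ (fun l _ => fullE l)) -mulr_sumr.
by rewrite weighted_pairing_commute ?mulr0 // delmx_Bmat_tr_commute.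
Qed.
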